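(* Let $\epsilon\in(0,1)$. Suppose $W=(W_1,\dots,W_n)\in\{0,1\}^n$ satisfies the $\epsilon$-martingale condition, and let $B=(B_1,\dots,B_n)\in\{0,1\}^n$ have independent coordinates with $\Pr[B_i=1]=(1-\epsilon)/2$. Let $R_\infty$ be a random variable on $\{0,1,2,\dots\}$ with \[ \Pr[R_\infty=k]=\frac{2\epsilon}{1+\epsilon}\left(\frac{1-\epsilon}{1+\epsilon}\right)^k,\qquad k=0,1,2,\dots. \] Then $\rho(W)\preceq\rho(B)\preceq R_\infty$, i.e., $\rho(B)$ stochastically dominates $\rho(W)$ and $R_\infty$ stochastically dominates $\rho(B)$.
   Context: Characteristic strings and forks. For $w=w_1\dots w_n\in\{0,1\}^n$ (index $i$ honest if $w_i=0$, adversarial if $w_i=1$), a fork for $w$ is a rooted tree with edges directed away from the root $r$ and labeling $\ell:V\to\{0,\dots,n\}$ with (F1) $\ell(r)=0$; (F2) labels strictly increasing along directed paths; (F3) each honest index labels exactly one vertex; (F4) for honest $i<j$ the vertex labeled $i$ has strictly smaller depth than the vertex labeled $j$. A vertex is honest if it is the root or labeled by an honest index. A tine is a directed path from the root; its length is its number of edges, $\ell(t)$ the label of its last vertex. A fork is closed if every leaf is honest; a closed fork has a unique longest tine $\hat t$. For closed $F$ and tine $t$: $\mathrm{gap}(t)=\mathrm{length}(\hat t)-\mathrm{length}(t)$, $\mathrm{reserve}(t)=|\{i:w_i=1,\ i>\ell(t)\}|$, $\mathrm{reach}(t)=\mathrm{reserve}(t)-\mathrm{gap}(t)$; $\rho(F)=\max_t\mathrm{reach}(t)$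 and $\rho(w)=\max\{\rho(F):F \text{ a closed fork for } w\}$. A random variable $W\in\{0,1\}^n$ satisfies the $\epsilon$-martingale condition if for every $t$, $\Pr[W_t=1\mid W_1,\dots,W_{t-1}]\le(1-\epsilon)/2$ for arbitrary conditioning values. For real random variables, $Y\preceq X$ ($X$ stochastically dominates $Y$) means $\Pr[X\ge\Lambda]\ge\Pr[Y\ge\Lambda]$ for every $\Lambda\in\mathbb{R}$. *)

From HB Require Import structures.
From mathcomp Require Import all_boot all_order all_algebra.
From mathcomp Require Import all_classical all_reals all_analysis.
Set Implicit Arguments. Unset Strict Implicit. Unset Printing Implicit Defensive.
Import Order.TTheory GRing.Theory Num.Theory.
Local Open Scope ring_scope.

(* w : n.-tuple bool; the 1-based index i (1 <= i <= n) has bit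
   w_i = nth false w i.-1 ; true = adversarial (1), false = honest (0). *)
Definition wbit n (w : n.-tuple bool) (i : nat) : bool := nth false w i.-1.

Definition honest_idx n (w : n.-tuple bool) (i : nat) : bool :=
  (0 < i <= n)%N && ~~ wbit w i.

(* A fork with m.+1 vertices 'I_m.+1, root = ord0, given by a parent map
   [par] (edges par v -> v, directed away from the root) and labeling [lab].
   Requiring par v < v for v <> root makes this exactly a rooted tree. *)
Section Fork.
Variables (m : nat) (par : 'I_m.+1 -> 'I_m.+1) (lab : 'I_m.+1 -> nat).

Fixpoint depth_aux (k : nat) (v : 'I_m.+1) : nat :=
  match k with
  | 0 => 0
  | k'.+1 => if v == ord0 then 0 else (depth_aux k' (par v)).+1
  end.

Definition depth (v : 'I_m.+1) : nat := depth_aux v v.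

Definition is_leaf (v : 'I_m.+1) : bool :=
  [forall c : 'I_m.+1, (c != ord0) ==> (par c != v)].

End Fork.

Definition is_fork n (w : n.-tuple bool) m (par : 'I_m.+1 -> 'I_m.+1)
    (lab : 'I_m.+1 -> nat) : Prop :=
  (forall v : 'I_m.+1, v != ord0 -> (par v < v)%N) /\
  (forall v, (lab v <= n)%N) /\
  lab ord0 = 0%N /\
  (forall v : 'I_m.+1, v != ord0 -> (lab (par v) < lab v)%N) /\
  (forall i, honest_idx w i -> #|[set v | lab v == i]| = 1%N) /\
  (forall u v, honest_idx w (lab u) -> honest_idx w (lab v) ->
     (lab u < lab v)%N -> (depth par u < depth par v)%N).

Definition honest_vertex n (w : n.-tuple bool) m (lab : 'I_m.+1 -> nat)
    (v : 'I_m.+1) : bool := (v == ord0) || honest_idx w (lab v).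

Definition is_closed_fork n (w : n.-tuple bool) m (par : 'I_m.+1 -> 'I_m.+1)
    (lab : 'I_m.+1 -> nat) : Prop :=
  is_fork w par lab /\
  (forall v, is_leaf par v -> honest_vertex w lab v).

(* A tine is identified with its terminal vertex v: length = depth v,
   ell(t) = lab v. *)
Definition max_length m (par : 'I_m.+1 -> 'I_m.+1) : nat :=
  \max_(v : 'I_m.+1) depth par v.

Definition gap m (par : 'I_m.+1 -> 'I_m.+1) (v : 'I_m.+1) : nat :=
  (max_length par - depth par v)%N.

Definition reserve n (w : n.-tuple bool) m (lab : 'I_m.+1 -> nat)
    (v : 'I_m.+1) : nat :=
  #|[set i : 'I_n | wbit w i.+1 & (lab v < i.+1)%N]|.

Definition reach n (w : n.-tuple bool) m (par : 'I_m.+1 -> 'I_m.+1)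
    (lab : 'I_m.+1 -> nat) (v : 'I_m.+1) : int :=
  (reserve w lab v)%:Z - (gap par v)%:Z.

Definition rhoF n (w : n.-tuple bool) m (par : 'I_m.+1 -> 'I_m.+1)
    (lab : 'I_m.+1 -> nat) : int :=
  \big[Order.max/reach w par lab ord0]_(v : 'I_m.+1) reach w par lab v.

(* rho(w) = max of rho(F) over closed forks F for w (taken as a sup in R;
   the set is nonempty and bounded above by n, so it is attained) *)
Definition rho (R : realType) n (w : n.-tuple bool) : R :=
  sup [set x : R | exists m (par : 'I_m.+1 -> 'I_m.+1) (lab : 'I_m.+1 -> nat),
         is_closed_fork w par lab /\ x = (rhoF w par lab)%:~R].

Definition is_pmf (R : realType) n (p : n.-tuple bool -> R) : Prop :=
  (forall w, 0 <= p w) /\ \sum_(w : n.-tuple bool) p w = 1.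

Definition prefix_prob (R : realType) n (p : n.-tuple bool -> R)
    (x : seq bool) : R :=
  \sum_(w : n.-tuple bool | take (size x) w == x) p w.

(* eps-martingale condition: for every t (0 <= t < n) and every prefix x of
   length t, Pr[W_1..W_t = x, W_{t+1} = 1] <= (1-eps)/2 * Pr[W_1..W_t = x]
   (i.e. Pr[W_{t+1}=1 | W_1..W_t = x] <= (1-eps)/2 whenever defined). *)
Definition martingale_cond (R : realType) (eps : R) n
    (p : n.-tuple bool -> R) : Prop :=
  forall x : seq bool, (size x < n)%N ->
    prefix_prob p (rcons x true) <= (1 - eps) / 2 * prefix_prob p x.

Definition B_law_pmf (R : realType) (eps : R) n (w : n.-tuple bool) : R :=
  \prod_(i < n) (if tnth w i then (1 - eps) / 2 else 1 - (1 - eps) / 2).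

Definition rho_tail (R : realType) n (p : n.-tuple bool -> R) (L : R) : R :=
  \sum_(w : n.-tuple bool | L <= rho R w) p w.

Definition Rinf_pmf (R : realType) (eps : R) (k : nat) : R :=
  (2 * eps / (1 + eps)) * ((1 - eps) / (1 + eps)) ^+ k.

Definition Rinf_tail (R : realType) (eps : R) (L : R) : \bar R :=
  (\sum_(k <oo | (L <= k%:R)%R) (Rinf_pmf eps k)%:E)%E.

From HB Require Import structures.
From mathcomp Require Import all_boot all_order all_algebra.
From mathcomp Require Import all_classical all_reals all_analysis.
From mathcomp Require Import zify ring lra.
Set Implicit Arguments. Unset Strict Implicit. Unset Printing Implicit Defensive.
Import Order.TTheory GRing.Theory Num.Theory.
Local Open Scope ring_scope.

(* rho(w) is the largest excess of adversarial over honest indices in a suffix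
   of w: in a closed fork a tine gains at most one level per adversarial index
   after its last honest vertex, while every later honest index forces the
   longest tine one level deeper; the fork made of a single tine through all
   honest indices attains this bound.  The excess is monotone in w, so coupling
   W and B one bit at a time shows that rho(B) dominates rho(W).  Under the law
   of B it is a random walk reflected at 0 with up-steps of probability
   q = (1 - eps)/2, whose tail at k is at most (q/(1-q))^k = Pr[R_inf >= k]. *)

(** * rho as a maximal suffix margin *)

Definition count_between (P : pred nat) (a b : nat) : nat :=
  count P (iota a.+1 (b - a)).

Lemma count_between_split (P : pred nat) a b c : (a <= b <= c)%N ->
  count_between P a c = (count_between P a b + count_between P b c)%N.
Proof.
move=> /andP[ab bc]; rewrite /count_between -count_cat.
have -> : (c - a = (b - a) + (c - b))%N by lia.
by rewrite iotaD; have -> : (a.+1 + (b - a) = b.+1)%N by lia.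
Qed.

Lemma count_between_last (P : pred nat) a c : (a < c)%N ->
  count_between P a c = (count_between P a c.-1 + P c)%N.
Proof.
move=> ac; rewrite (@count_between_split P a c.-1 c); last by lia.
rewrite /count_between; have -> : (c - c.-1 = 1)%N by lia.
by rewrite prednK ?(leq_ltn_trans _ ac) //= addn0.
Qed.

Lemma count_between_nil (P : pred nat) a : count_between P a a = 0%N.
Proof. by rewrite /count_between subnn. Qed.

Lemma eq_count_between (P Q : pred nat) a b :
  (forall i, (a < i <= b)%N -> P i = Q i) ->
  count_between P a b = count_between Q a b.
Proof.
move=> PQ; apply: eq_in_count => i; rewrite mem_iota => /andP[ai ib].
by apply: PQ; lia.
Qed.

Lemma card_ord_between (P : pred nat) a n : (a <= n)%N ->
  #|[set i : 'I_n | P i.+1 && (a < i.+1)%N]| = count_between P a n.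
Proof.
move=> an; have -> : #|[set i : 'I_n | P i.+1 && (a < i.+1)%N]| =
    count (fun i => P i.+1 && (a < i.+1)%N) (iota 0 n).
  by rewrite cardsE cardE /enum_mem size_filter -val_enum_ord count_map enumT.
rewrite -{1}(subnKC an) iotaD count_cat add0n.
rewrite (eq_in_count (a2 := pred0)) ?count_pred0; last first.
  by move=> i; rewrite mem_iota => /andP[_ ia] /=; apply/negbTE; lia.
rewrite /count_between -add1n iotaDl count_map.
apply: eq_in_count => i; rewrite mem_iota => /andP[ai _] /=.
by rewrite add1n ltnS ai andbT.
Qed.

Section MaxSuffixMargin.
Variables (n : nat) (w : n.-tuple bool).

Local Notation adv := (count_between (wbit w)).
Local Notation hon := (count_between (predC (wbit w))).

(* The reflected walk rho(x1) = rho(x) + 1, rho(x0) = max(rho(x) - 1, 0)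
   unfolds to this maximum over suffixes; a = n is the empty suffix. *)
Definition max_suffix_margin : nat := \max_(a < n.+1) (adv a n - hon a n)%N.

Lemma suffix_margin_le a : (a <= n)%N ->
  (adv a n)%:Z - (hon a n)%:Z <= max_suffix_margin%:Z.
Proof.
move=> an; have := @leq_bigmax _ (fun a : 'I_n.+1 => adv a n - hon a n)%N
  (Ordinal (an : a < n.+1)%N).
rewrite -/max_suffix_margin /=; lia.
Qed.

Lemma reserveE m (lab : 'I_m.+1 -> nat) v : (lab v <= n)%N ->
  reserve w lab v = adv (lab v) n.
Proof. exact: card_ord_between. Qed.

Section ParentMap.
Variables (m : nat) (par : 'I_m.+1 -> 'I_m.+1).
Hypothesis par_lt : forall v : 'I_m.+1, v != ord0 -> (par v < v)%N.

Lemma depth_aux_fuel k1 k2 (v : 'I_m.+1) : (v <= k1)%N -> (v <= k2)%N ->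
  depth_aux par k1 v = depth_aux par k2 v.
Proof.
have v0 (u : 'I_m.+1) : (u <= 0)%N -> u = ord0 by move=> u0; apply: val_inj => /=; lia.
elim: k1 k2 v => [|k1 IH] [|k2] v //= h1 h2; rewrite ?(v0 v h1) ?(v0 v h2) //.
by case: eqP => // /eqP hv; congr S; apply: IH; have := par_lt hv; lia.
Qed.

Lemma depth_par v : v != ord0 -> depth par v = (depth par (par v)).+1.
Proof.
move=> hv; rewrite /depth; case: v hv => [[|k] hk] hv //=.
by congr S; apply: depth_aux_fuel => //; have := par_lt hv => /=; lia.
Qed.

End ParentMap.

Lemma depth_le_max_length m (par : 'I_m.+1 -> 'I_m.+1) v :
  (depth par v <= max_length par)%N.
Proof. exact: (@leq_bigmax _ (fun v => depth par v)). Qed.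

Section ForkUpperBound.
Variables (m : nat) (par : 'I_m.+1 -> 'I_m.+1) (lab : 'I_m.+1 -> nat).
Hypothesis fork : is_fork w par lab.

(* Going up from v, every non-honest vertex carries a distinct adversarial
   label above that of the first honest vertex u met. *)
Lemma honest_ancestor_bound v : exists2 u, honest_vertex w lab u &
  (lab u <= lab v)%N /\ (depth par v <= depth par u + adv (lab u) (lab v))%N.
Proof.
have [par_lt [lab_le [_ [lab_lt _]]]] := fork.
have [k] := ubnP v; elim: k v => [|k IH] v // vk.
have [hv|nhv] := boolP (honest_vertex w lab v).
  by exists v => //; rewrite count_between_nil addn0.
have v0 : v != ord0 by apply: contraNneq nhv => ->; rewrite /honest_vertex eqxx.
have [u hu [lu du]] := IH (par v) (leq_trans (par_lt v v0) vk).
have lpv := lab_lt v v0.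
have adv_v : wbit w (lab v).
  apply: contraNT nhv => hw.
  by rewrite /honest_vertex /honest_idx hw lab_le (leq_ltn_trans _ lpv) ?orbT.
exists u => //; split; first exact: leq_trans lu (ltnW lpv).
rewrite (depth_par par_lt v0) (@count_between_split _ (lab u) (lab (par v))); last first.
  by rewrite lu ltnW.
by rewrite (count_between_last _ lpv) adv_v; lia.
Qed.

Lemma honest_idx_labels i : honest_idx w i -> exists y, lab y = i.
Proof.
have [_ [_ [_ [_ [F3 _]]]]] := fork; move=> /F3 /eqP /cards1P [y hy].
by exists y; apply/eqP; have := set11 y; rewrite -hy inE.
Qed.

Lemma depth_lt_honest x y : honest_vertex w lab x -> honest_idx w (lab y) ->
  (lab x < lab y)%N -> (depth par x < depth par y)%N.
Proof.
have [par_lt [_ [lab0 [_ [_ F4]]]]] := fork.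
rewrite /honest_vertex; case: eqP => [-> _ hy _|_ /= hx hy]; last exact: F4.
have y0 : y != ord0 by apply: contraTneq hy => ->; rewrite /honest_idx lab0.
by rewrite (depth_par par_lt y0).
Qed.

(* By (F3) and (F4), each honest index after lab u adds a deeper vertex. *)
Lemma honest_depth_bound u : honest_vertex w lab u ->
  (depth par u + hon (lab u) n <= max_length par)%N.
Proof.
have [_ [lab_le _]] := fork; move=> hu.
have deeper d : (lab u + d <= n)%N -> exists2 x, honest_vertex w lab x &
    (lab x <= lab u + d)%N /\ (depth par u + hon (lab u) (lab u + d) <= depth par x)%N.
  elim: d => [|d IH] hd; first by exists u; rewrite ?addn0 ?count_between_nil ?addn0.
  rewrite addnS in hd *; have [x hx [lx dx]] := IH (ltnW hd).
  have ud : (lab u < (lab u + d).+1)%N by rewrite ltnS leq_addr.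
  rewrite (count_between_last _ ud) /=.
  case hj: (wbit w (lab u + d).+1) => /=.
    by exists x => //; rewrite addn0 (leq_trans lx).
  have hj' : honest_idx w (lab u + d).+1 by rewrite /honest_idx hj hd.
  have [y ly] := honest_idx_labels hj'.
  exists y; first by rewrite /honest_vertex ly hj' orbT.
  split; first by rewrite ly.
  have : (depth par x < depth par y)%N by apply: depth_lt_honest; rewrite ?ly.
  lia.
have [x _ [_]] := deeper _ (eq_leq (subnKC (lab_le u))).
rewrite subnKC // => dx; exact: leq_trans dx (depth_le_max_length par x).
Qed.

Lemma reach_le_margin v : reach w par lab v <= max_suffix_margin%:Z.
Proof.
have [_ [lab_le _]] := fork.
have [u hu [lu du]] := honest_ancestor_bound v.
have hmax := honest_depth_bound hu.
have := suffix_margin_le (lab_le u); have := depth_le_max_length par v.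
rewrite /reach /gap (reserveE (lab_le v)) (@count_between_split _ (lab u) (lab v) n).
  lia.
by rewrite lu lab_le.
Qed.

End ForkUpperBound.

Lemma reach_le_rhoF m (par : 'I_m.+1 -> 'I_m.+1) lab v :
  reach w par lab v <= rhoF w par lab.
Proof. by rewrite /rhoF (bigD1 v) //= le_max lexx. Qed.

Lemma rhoF_le_margin m (par : 'I_m.+1 -> 'I_m.+1) lab :
  is_fork w par lab -> rhoF w par lab <= max_suffix_margin%:Z.
Proof.
move=> fork; apply: (big_ind (fun x => x <= _)) => [|x y hx hy|v _].
- exact: reach_le_margin.
- by rewrite ge_max hx hy.
- exact: reach_le_margin.
Qed.

Definition honest_indices : seq nat := [seq i <- iota 1 n | ~~ wbit w i].

Local Notation k := (size honest_indices).

(* The fork witnessing the lower bound: a single tine through the root and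
   all honest indices in increasing order. *)
Definition chain_lab (j : 'I_k.+1) : nat := nth 0%N (0%N :: honest_indices) j.
Definition chain_par (j : 'I_k.+1) : 'I_k.+1 := inord j.-1.

Lemma mem_honest_indices i : (i \in honest_indices) = ~~ wbit w i && (0 < i <= n)%N.
Proof. by rewrite mem_filter mem_iota add1n. Qed.

Lemma size_honest_indices : k = hon 0 n.
Proof. by rewrite size_filter /count_between subn0. Qed.

Lemma sorted_honest_indices : sorted ltn (0%N :: honest_indices).
Proof.
rewrite /= path_min_sorted; last first.
  by apply/allP => i; rewrite mem_honest_indices => /andP[_ /andP[]].
by apply: sorted_filter; [exact: ltn_trans | exact: iota_ltn_sorted].
Qed.

Lemma chain_lab_lt (i j : 'I_k.+1) : (i < j)%N -> (chain_lab i < chain_lab j)%N.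
Proof.
move=> ij; apply: (sorted_ltn_nth ltn_trans 0%N sorted_honest_indices) => //.
all: by rewrite inE /=.
Qed.

Lemma chain_lab_honest (j : 'I_k.+1) : j != ord0 -> honest_idx w (chain_lab j).
Proof.
case: j => [[|j] hj] //= _; rewrite /honest_idx /chain_lab /= andbC.
by rewrite -mem_honest_indices mem_nth.
Qed.

Lemma chain_lab_le (j : 'I_k.+1) : (chain_lab j <= n)%N.
Proof.
have [->|/chain_lab_honest] := eqVneq j ord0; first by [].
by case/andP=> /andP[].
Qed.

Lemma chain_par_val (j : 'I_k.+1) : chain_par j = j.-1 :> nat.
Proof. by rewrite /chain_par inordK // (leq_ltn_trans (leq_pred j)). Qed.

Lemma chain_par_lt (j : 'I_k.+1) : j != ord0 -> (chain_par j < j)%N.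
Proof. by rewrite chain_par_val; case: j => [[|j] hj]. Qed.

Lemma chain_depth (j : 'I_k.+1) : depth chain_par j = j.
Proof.
have [b] := ubnP j; elim: b j => [|b IH] j // jb.
have [->|j0] := eqVneq j ord0; first by [].
rewrite (depth_par chain_par_lt j0) IH; last exact: leq_trans (chain_par_lt j0) jb.
by rewrite chain_par_val; case: j j0 {jb} => [[|j] hj].
Qed.

Lemma chain_max_length : max_length chain_par = k.
Proof.
apply/eqP; rewrite eqn_leq; apply/andP; split.
  by apply/bigmax_leqP => j _; rewrite chain_depth -ltnS.
by have := depth_le_max_length chain_par ord_max; rewrite chain_depth.
Qed.

Lemma chain_is_closed_fork : is_closed_fork w chain_par chain_lab.
Proof.
split; last first.
  move=> v _; rewrite /honest_vertex; case: eqVneq => //= v0.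
  exact: chain_lab_honest.
refine (conj chain_par_lt (conj chain_lab_le (conj erefl (conj _ (conj _ _))))).
- by move=> v /chain_par_lt; exact: chain_lab_lt.
- move=> i hi; apply/eqP/cards1P.
  have i_in : i \in 0%N :: honest_indices.
    by rewrite inE mem_honest_indices andbC [_ && _]hi orbT.
  have uniq_hs : uniq (0%N :: honest_indices).
    exact: (sorted_uniq ltn_trans ltnn sorted_honest_indices).
  have i_lt : (index i (0%N :: honest_indices) < k.+1)%N by rewrite -index_mem in i_in.
  exists (Ordinal i_lt).
  apply/setP => v; rewrite !inE /chain_lab; apply/eqP/eqP => [vi|->].
    by apply: val_inj; rewrite -[RHS]/(index i _) -vi index_uniq.
  by rewrite /= nth_index.
- move=> u v _ _ luv; rewrite !chain_depth ltnNge; apply: contraL luv => vu.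
  rewrite -leqNgt; move: vu; rewrite leq_eqVlt => /orP[/eqP/val_inj -> //|].
  by move/chain_lab_lt/ltnW.
Qed.

Lemma chain_reach a : (a <= n)%N ->
  exists v, (adv a n)%:Z - (hon a n)%:Z <= reach w chain_par chain_lab v.
Proof.
move=> an; set j := hon 0 a.
have hsE : honest_indices =
    [seq i <- iota 1 a | ~~ wbit w i] ++ [seq i <- iota a.+1 (n - a) | ~~ wbit w i].
  by rewrite -filter_cat -[a.+1]add1n -iotaD subnKC.
have jE : j = size [seq i <- iota 1 a | ~~ wbit w i].
  by rewrite size_filter /j /count_between subn0.
have jk : (j < k.+1)%N by rewrite ltnS hsE size_cat -jE leq_addr.
exists (Ordinal jk).
have la : (chain_lab (Ordinal jk) <= a)%N.
  rewrite /chain_lab /=; case: j jE {jk} => [|j] jE //=.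
  rewrite hsE nth_cat -jE ltnSn.
  have : nth 0%N [seq i <- iota 1 a | ~~ wbit w i] j \in
      [seq i <- iota 1 a | ~~ wbit w i] by apply: mem_nth; rewrite -jE.
  by rewrite mem_filter mem_iota add1n ltnS => /andP[_ /andP[]].
have hk : k = (j + hon a n)%N.
  by rewrite size_honest_indices (@count_between_split _ 0 a n).
rewrite /reach /gap (reserveE (chain_lab_le _)) chain_max_length chain_depth.
rewrite (@count_between_split _ (chain_lab _) a n) ?la ?an //=; lia.
Qed.

Lemma margin_le_rhoF_chain : max_suffix_margin%:Z <= rhoF w chain_par chain_lab.
Proof.
have [a ->] : exists a : 'I_n.+1, max_suffix_margin = (adv a n - hon a n)%N.
  by rewrite /max_suffix_margin (bigop.bigmax_eq_arg ord0) //; eexists.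
have [ha|ha] := leqP (hon a n) (adv a n).
  have [v hv] := chain_reach (ltnSE (ltn_ord a)).
  by apply: le_trans (reach_le_rhoF _ _ v); apply: le_trans hv; lia.
have [v hv] := chain_reach (leqnn n).
apply: le_trans (reach_le_rhoF _ _ v); apply: le_trans hv.
by rewrite !count_between_nil; lia.
Qed.

Lemma rho_max_suffix_margin (R : realType) : rho R w = max_suffix_margin%:R.
Proof.
rewrite /rho; set E := (X in sup X).
have rhoF_le m (par : 'I_m.+1 -> 'I_m.+1) lab : is_closed_fork w par lab ->
    (rhoF w par lab)%:~R <= max_suffix_margin%:R :> R.
  by case=> fork _; rewrite -[_%:R]/((max_suffix_margin%:Z)%:~R) ler_int rhoF_le_margin.
have ubE : ubound E max_suffix_margin%:R by move=> _ [m [par [lab [/rhoF_le + ->]]]].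
have attained : E max_suffix_margin%:R.
  exists k, chain_par, chain_lab; split; first exact: chain_is_closed_fork.
  apply/eqP; rewrite eq_le (rhoF_le _ _ _ chain_is_closed_fork) andbT.
  by rewrite -[_%:R]/((max_suffix_margin%:Z)%:~R) ler_int margin_le_rhoF_chain.
apply/eqP; rewrite eq_le ge_sup ?ub_le_sup //; by exists max_suffix_margin%:R.
Qed.

End MaxSuffixMargin.

Definition bitwise_le n (w w' : n.-tuple bool) : Prop := forall i, tnth w i ==> tnth w' i.

Definition upward_closed n (U : pred (n.-tuple bool)) : Prop :=
  forall w w', bitwise_le w w' -> U w -> U w'.

Lemma bitwise_le_cons n b b' (t t' : n.-tuple bool) :
  b ==> b' -> bitwise_le t t' -> bitwise_le [tuple of b :: t] [tuple of b' :: t'].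
Proof.
by move=> bb' tt' i; case: (unliftP ord0 i) => [j ->|->]; rewrite ?tnthS ?tnth0.
Qed.

Lemma wbit_mono n (w w' : n.-tuple bool) : bitwise_le w w' ->
  forall i, wbit w i ==> wbit w' i.
Proof.
move=> ww' i; rewrite /wbit; case: (ltnP i.-1 n) => hi.
  by have := ww' (Ordinal hi); rewrite !(tnth_nth false).
by rewrite !nth_default ?size_tuple.
Qed.

Lemma max_suffix_margin_mono n (w w' : n.-tuple bool) : bitwise_le w w' ->
  (max_suffix_margin w <= max_suffix_margin w')%N.
Proof.
move=> /wbit_mono ww'; apply/bigmax_leqP => a _; apply: leq_trans (leq_bigmax a).
apply: leq_sub; apply: sub_count => i /=; first exact: (implyP (ww' i)).
by apply: contra; exact: (implyP (ww' i)).
Qed.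

Lemma wbit_rcons n (t : n.-tuple bool) b i : (0 < i <= n)%N ->
  wbit [tuple of rcons t b] i = wbit t i.
Proof. by move=> /andP[i0 iN]; rewrite /wbit /= nth_rcons size_tuple ifT //; lia. Qed.

Lemma wbit_rcons_last n (t : n.-tuple bool) b : wbit [tuple of rcons t b] n.+1 = b.
Proof. by rewrite /wbit /= nth_rcons size_tuple ltnn eqxx. Qed.

Lemma max_suffix_margin_rcons n (t : n.-tuple bool) b :
  (max_suffix_margin [tuple of rcons t b] <=
     if b then (max_suffix_margin t).+1 else (max_suffix_margin t).-1)%N.
Proof.
apply/bigmax_leqP => a _; have [an|] := ltnP a n.+1; last first.
  move=> na; have -> : a = n.+1 :> nat by have := ltn_ord a; lia.
  by rewrite !count_between_nil.
have eA : count_between (wbit [tuple of rcons t b]) a n = count_between (wbit t) a n.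
  by apply: eq_count_between => i ai; apply: wbit_rcons; lia.
have eH : count_between (predC (wbit [tuple of rcons t b])) a n =
    count_between (predC (wbit t)) a n.
  by apply: eq_count_between => i ai /=; rewrite wbit_rcons //; lia.
rewrite !(count_between_last _ an) /= wbit_rcons_last eA eH.
have := suffix_margin_le t an; case: b {eA eH}; lia.
Qed.

(** * Domination by Bernoulli strings *)

Section Probability.
Variable R : realType.

Definition bern_pmf (q : R) n (w : n.-tuple bool) : R :=
  \prod_(i < n) (if tnth w i then q else 1 - q).

Definition martingale_le (q : R) n (p : n.-tuple bool -> R) : Prop :=
  forall x : seq bool, (size x < n)%N ->
    prefix_prob p (rcons x true) <= q * prefix_prob p x.

Lemma big_tuple0 (P : pred (0.-tuple bool)) (F : 0.-tuple bool -> R) :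
  \sum_(w | P w) F w = if P [tuple] then F [tuple] else 0.
Proof. by rewrite big_mkcond (big_pred1 [tuple]) // => t; apply/esym/eqP/tuple0. Qed.

Lemma big_tuple_cons n (P : pred (n.+1.-tuple bool)) (F : n.+1.-tuple bool -> R) :
  \sum_(w | P w) F w =
  \sum_(b : bool) \sum_(t : n.-tuple bool | P [tuple of b :: t]) F [tuple of b :: t].
Proof.
pose h (bt : bool * n.-tuple bool) : n.+1.-tuple bool := [tuple of bt.1 :: bt.2].
rewrite (reindex h) /=; first by rewrite pair_big_dep.
exists (fun w => (thead w, [tuple of behead w])) => [[b t] _|w _].
  by congr pair; apply: val_inj.
by apply/esym/tuple_eta.
Qed.

Lemma big_tuple_rcons n (P : pred (n.+1.-tuple bool)) (F : n.+1.-tuple bool -> R) :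
  \sum_(w | P w) F w =
  \sum_(b : bool)
    \sum_(t : n.-tuple bool | P [tuple of rcons t b]) F [tuple of rcons t b].
Proof.
pose h (bt : bool * n.-tuple bool) : n.+1.-tuple bool := [tuple of rcons bt.2 bt.1].
pose g (w : n.+1.-tuple bool) : bool * n.-tuple bool :=
  (last (thead w) (behead w), [tuple of belast (thead w) [tuple of behead w]]).
have hg w : h (g w) = w.
  by apply: val_inj; rewrite /= -lastI; exact: (esym (congr1 val (tuple_eta w))).
rewrite (reindex h) /=; first by rewrite pair_big_dep.
exists g => [[b t] _|w _]; last exact: hg.
have /(congr1 val) /= /rcons_inj [e1 e2] := hg (h (b, t)).
by congr pair => //; apply: val_inj.
Qed.

Lemma bern_pmf_cons q n b (t : n.-tuple bool) :
  bern_pmf q [tuple of b :: t] = (if b then q else 1 - q) * bern_pmf q t.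
Proof.
rewrite /bern_pmf big_ord_recl tnth0; congr (_ * _).
by apply: eq_bigr => i _; rewrite tnthS.
Qed.

Lemma bern_pmf_rcons q n b (t : n.-tuple bool) :
  bern_pmf q [tuple of rcons t b] = bern_pmf q t * (if b then q else 1 - q).
Proof.
rewrite /bern_pmf big_ord_recr /= (tnth_nth false) /= nth_rcons size_tuple ltnn eqxx.
congr (_ * _); apply: eq_bigr => i _.
by rewrite !(tnth_nth false) /= nth_rcons size_tuple ltn_ord.
Qed.

Lemma bern_pmf_ge0 q n (t : n.-tuple bool) : 0 <= q <= 1 -> 0 <= bern_pmf q t.
Proof. by move=> q01; apply: prodr_ge0 => i _; case: (tnth t i); lra. Qed.

Lemma prefix_prob_cons n (p : n.+1.-tuple bool -> R) b x :
  prefix_prob (fun t : n.-tuple bool => p [tuple of b :: t]) x = prefix_prob p (b :: x).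
Proof.
rewrite /prefix_prob big_tuple_cons big_bool /=.
case: b => /=.
  by rewrite [X in _ + X]big_pred0 ?addr0 // => t; rewrite eqseq_cons.
by rewrite [X in X + _]big_pred0 ?add0r // => t; rewrite eqseq_cons.
Qed.

Lemma prefix_prob_nil n (p : n.-tuple bool -> R) : prefix_prob p [::] = \sum_w p w.
Proof. by apply: eq_bigl => w; rewrite take0. Qed.

Lemma ler_sum_subpred (I : finType) (P Q : pred I) (F : I -> R) :
  (forall i, 0 <= F i) -> (forall i, P i -> Q i) ->
  \sum_(i | P i) F i <= \sum_(i | Q i) F i.
Proof.
move=> F0 PQ; rewrite big_mkcond [leRHS]big_mkcond; apply: ler_sum => i _.
by case: ifP => [/PQ -> //|_]; case: ifP.
Qed.

(* Induction on the first bit: p puts mass at most q on a leading 1, and an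
   upset is likelier after a leading 1 than after a leading 0. *)
Lemma upset_mass_le_bern q n (p : n.-tuple bool -> R) (U : pred (n.-tuple bool)) :
  0 <= q <= 1 -> martingale_le q p -> upward_closed U ->
  \sum_(w | U w) p w <= (\sum_w p w) * \sum_(w | U w) bern_pmf q w.
Proof.
move=> q01; elim: n p U => [|n IH] p U hp hU.
  rewrite !big_tuple0 /bern_pmf big_ord0.
  by case: (U _); rewrite ?mulr1 ?mulr0.
pose pb b (t : n.-tuple bool) := p [tuple of b :: t].
pose Ub b := [pred t : n.-tuple bool | U [tuple of b :: t]].
have hpb b : martingale_le q (pb b).
  by move=> x hx; rewrite !prefix_prob_cons -rcons_cons; apply: hp.
have hUb b : upward_closed (Ub b).
  by move=> t t' tt'; apply: hU; apply: bitwise_le_cons; rewrite ?implybb.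
have IH1 := IH _ _ (hpb true) (hUb true).
have IH0 := IH _ _ (hpb false) (hUb false).
have h0 := hp [::] isT.
rewrite -[rcons _ _]/[:: true] -prefix_prob_cons !prefix_prob_nil in h0.
have G01 : \sum_(t | Ub false t) bern_pmf q t <= \sum_(t | Ub true t) bern_pmf q t.
  apply: ler_sum_subpred => [t|t]; first exact: bern_pmf_ge0.
  by apply: hU; apply: bitwise_le_cons => // i; rewrite implybb.
have E1 : \sum_(w | U w) p w =
    \sum_(t | Ub true t) pb true t + \sum_(t | Ub false t) pb false t.
  by rewrite big_tuple_cons big_bool.
have E2 : \sum_w p w = \sum_t pb true t + \sum_t pb false t.
  by rewrite big_tuple_cons big_bool.
have E3 : \sum_(w | U w) bern_pmf q w = q * \sum_(t | Ub true t) bern_pmf q t +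
    (1 - q) * \sum_(t | Ub false t) bern_pmf q t.
  rewrite big_tuple_cons big_bool !mulr_sumr /=.
  by congr (_ + _); apply: eq_bigr => t _; rewrite bern_pmf_cons.
rewrite E1 E2 E3; rewrite E2 in h0.
set P1 := \sum_t pb true t in h0 IH1 *; set P0 := \sum_t pb false t in h0 IH0 *.
set G1 := \sum_(t | Ub true t) bern_pmf q t in G01 IH1 *.
set G0 := \sum_(t | Ub false t) bern_pmf q t in G01 IH0 *.
have : 0 <= (G1 - G0) * (q * (P1 + P0) - P1) by apply: mulr_ge0; rewrite subr_ge0.
nra.
Qed.

(* By [max_suffix_margin_rcons] the margin under [bern_pmf q] is dominated by
   a walk reflected at 0, and [b = q / (1 - q)] solves [b = q + (1 - q) b^2],
   so [b^k] bounds the tail recursion of that walk. *)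
Lemma bern_margin_tail q n k : 0 <= q < 1 ->
  \sum_(w : n.-tuple bool | (k <= max_suffix_margin w)%N) bern_pmf q w
  <= (q / (1 - q)) ^+ k.
Proof.
move=> q01; set b := q / (1 - q).
have b0 : 0 <= b by apply: divr_ge0; lra.
have bE : q + (1 - q) * b ^+ 2 = b by rewrite /b; field; lra.
elim: n k => [|n IH] k.
  rewrite big_tuple0 /bern_pmf big_ord0.
  have -> : max_suffix_margin [tuple] = 0%N.
    by apply/eqP; rewrite -leqn0; apply/bigmax_leqP => a _; rewrite /count_between sub0n.
  by case: k => [|k]; rewrite ?expr0 ?exprn_ge0.
have branch c kc : (forall t : n.-tuple bool,
      k <= max_suffix_margin [tuple of rcons t c] -> kc <= max_suffix_margin t)%N ->
    \sum_(t : n.-tuple bool | (k <= max_suffix_margin [tuple of rcons t c])%N)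
      bern_pmf q [tuple of rcons t c]
    <= (if c then q else 1 - q) * b ^+ kc.
  move=> hc; under eq_bigr do rewrite bern_pmf_rcons.
  rewrite -mulr_suml mulrC; apply: ler_wpM2l; first by case: (c); lra.
  apply: le_trans (IH kc); apply: ler_sum_subpred hc => t.
  by apply: bern_pmf_ge0; lra.
rewrite big_tuple_rcons big_bool /=; case: k branch => [|k] branch.
  apply: le_trans (lerD (branch true 0%N _) (branch false 0%N _)) _ => //.
  by rewrite !expr0; lra.
apply: le_trans (lerD (branch true k _) (branch false k.+2 _)) _.
- by move=> t /leq_trans/(_ (max_suffix_margin_rcons t true)).
- move=> t /leq_trans/(_ (max_suffix_margin_rcons t false)).
  by case: (max_suffix_margin t).
have -> : q * b ^+ k + (1 - q) * b ^+ k.+2 = b ^+ k * (q + (1 - q) * b ^+ 2).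
  by rewrite !exprS; ring.
by rewrite bE exprSr.
Qed.

End Probability.

(** * The law of R_inf *)

Section GeometricTail.
Variable R : realType.
Local Open Scope classical_set_scope.

Lemma nat_threshold (L : R) : exists k0, forall k : nat, (L <= k%:R) = (k0 <= k)%N.
Proof.
have exk : exists k : nat, L <= k%:R.
  by exists (Num.bound `|L|); apply: le_trans (ler_norm L) _; apply/ltW/archi_boundP.
have [k0 hk0 hmin] := ex_minnP exk; exists k0 => k.
by apply/idP/idP => [/hmin //|hk]; apply: le_trans hk0 _; rewrite ler_nat.
Qed.

(* The partial sums telescope, since [Rinf_pmf eps i = b^i - b^(i+1)]. *)
Lemma Rinf_tail_geometric (eps L : R) k0 : 0 < eps < 1 ->
  (forall k : nat, (L <= k%:R) = (k0 <= k)%N) ->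
  Rinf_tail eps L = (((1 - eps) / (1 + eps)) ^+ k0)%:E.
Proof.
move=> eps01 hL; set b := (1 - eps) / (1 + eps).
pose r N := \sum_(0 <= i < N) (if (k0 <= i)%N then Rinf_pmf eps i else 0).
have -> : Rinf_tail eps L = limn (EFin \o r).
  apply/congr_lim/funext => N /=; rewrite sumEFin /r big_mkcond /=.
  by congr EFin; apply: eq_bigr => i _; rewrite hL.
have pmfE i : Rinf_pmf eps i = b ^+ i - b ^+ i.+1.
  rewrite /Rinf_pmf exprS -/b.
  have -> : 2 * eps / (1 + eps) = 1 - b by rewrite /b; field; lra.
  ring.
have rE d : r (k0 + d)%N = b ^+ k0 - b ^+ (k0 + d).
  elim: d => [|d IH].
    rewrite addn0 subrr /r big1_seq // => i; rewrite mem_iota add0n subn0.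
    by case/and3P=> _ _ ik; rewrite leqNgt ik.
  by rewrite /r addnS big_nat_recr //= -/(r _) IH leq_addr pmfE; lra.
have hr : r @ \oo --> b ^+ k0.
  apply: (cvg_trans (near_eq_cvg (f := fun N => b ^+ k0 - b ^+ N) _)).
    near=> N; have : (k0 <= N)%N by near: N; apply: nbhs_infty_ge.
    by move/subnKC <-; rewrite rE.
  have hb : `|b| < 1.
    by rewrite ger0_norm /b; [rewrite ltr_pdivrMr; lra | apply: divr_ge0; lra].
  by have := cvgB (cvg_cst (b ^+ k0)) (cvg_expr hb); rewrite subr0; apply.
by rewrite EFin_lim ?(cvg_lim _ hr) //; exact: cvgP hr.
Unshelve. all: by end_near.
Qed.

End GeometricTail.

Theorem lemma4 (R : realType) (eps : R) (n : nat) (pW : n.-tuple bool -> R) :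
  0 < eps < 1 ->
  is_pmf pW ->
  martingale_cond eps pW ->
  forall L : R,
    rho_tail pW L <= rho_tail (@B_law_pmf R eps n) L /\
    ((rho_tail (@B_law_pmf R eps n) L)%:E <= Rinf_tail eps L)%E.
Proof.
move=> eps01 [_ pW1] mart L; set q := (1 - eps) / 2.
have q01 : 0 <= q <= 1 by rewrite /q; lra.
have tailE p : rho_tail p L = \sum_(w | L <= (max_suffix_margin w)%:R) p w.
  by apply: eq_bigl => w; rewrite rho_max_suffix_margin.
have upset : upward_closed (fun w : n.-tuple bool => L <= (max_suffix_margin w)%:R).
  by move=> w w' /max_suffix_margin_mono ww' /le_trans; apply; rewrite ler_nat.
split.
  by rewrite !tailE; have := upset_mass_le_bern q01 mart upset; rewrite pW1 mul1r.
have [k0 hL] := nat_threshold L.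
rewrite (Rinf_tail_geometric eps01 hL) lee_fin tailE.
under eq_bigl do rewrite hL.
have -> : (1 - eps) / (1 + eps) = q / (1 - q) by rewrite /q; field; lra.
by apply: bern_margin_tail; rewrite /q; lra.
Qed.
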